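(* Let $V$ be a finite nonempty set and $f:\{0,1\}^V\to\{0,1\}^V$. If $f$ has no even-self-dual and no odd-self-dual subnetwork, then $f$ has a unique fixed point $x$, and for every $y\in\{0,1\}^V$ the asynchronous state graph $\Gamma(f)$ contains a directed path from $y$ to $x$ of length $d(x,y)$.
   Context: For $x,y\in\{0,1\}^V$, $x\oplus y$ is componentwise addition mod 2, $1$ is the all-ones point, $e_i$ is the point whose only $1$ is at component $i$, $\|x\|$ is the number of $1$s of $x$, and $d(x,y)=\|x\oplus y\|$ is the Hamming distance; $x$ is even (odd) if $\|x\|$ is even (odd). The conjugate of a network $g$ on $W$ is $\tilde g(x)=g(x)\oplus x$. For nonempty $I\subseteq V$ and $z\in\{0,1\}^{V\setminus I}$, the subnetwork of $f$ induced by $z$ is $h:\{0,1\}^I\to\{0,1\}^I$ with $h(x|_I)=f(x)|_I$ for all $x$ whose restriction to $V\setminus I$ is $z$ ($f$ is a subnetwork of itself). A network $g$ on $W$ is self-dual if $g(x\oplus 1)=g(x)\oplus 1$ for all $x$; even (odd) if $\tilde g(\{0,1\}^W)$ is exactly the set of even (odd) points; even-self-dual (odd-self-dual) if both even (odd) and self-dual. The asynchronous state graph $\Gamma(f)$ is the digraph on vertex set $\{0,1\}^V$ with an arc $x\to x\oplus e_i$ for every $x$ and $i\in V$ such that $f_i(x)\neq x_i$. *)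

From mathcomp Require Import all_boot.
Set Implicit Arguments. Unset Strict Implicit. Unset Printing Implicit Defensive.

Section Networks.
Variable W : finType.
Notation point := {ffun W -> bool}.

Definition xorp (x y : point) : point := [ffun i => x i (+) y i].
Definition ones : point := [ffun _ => true].
Definition unit_pt (i : W) : point := [ffun j => j == i].
Definition weight (x : point) : nat := #|[set i | x i]|.
Definition hdist (x y : point) : nat := weight (xorp x y).
Definition even_pt (x : point) : bool := ~~ odd (weight x).
Definition odd_pt (x : point) : bool := odd (weight x).

Definition conjn (g : point -> point) (x : point) : point := xorp (g x) x.
Definition self_dual (g : point -> point) : Prop :=
  forall x, g (xorp x ones) = xorp (g x) ones.
Definition even_net (g : point -> point) : Prop :=
  forall y, (exists x, conjn g x = y) <-> even_pt y.
Definition odd_net (g : point -> point) : Prop :=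
  forall y, (exists x, conjn g x = y) <-> odd_pt y.
Definition even_self_dual (g : point -> point) : Prop := even_net g /\ self_dual g.
Definition odd_self_dual (g : point -> point) : Prop := odd_net g /\ self_dual g.

Definition async_arc (f : point -> point) : rel point :=
  fun x y => [exists i, (f x i != x i) && (y == xorp x (unit_pt i))].
End Networks.

Section Subnetworks.
Variable V : finType.
Definition subT (I : {set V}) : finType := {v : V | v \in I}.

Definition glue (I : {set V}) (y : {ffun subT I -> bool}) (w : {ffun V -> bool})
  : {ffun V -> bool} :=
  [ffun v => if insub v is Some u then y u else w v].

(* subnetwork of f induced by the restriction of w to V \ I *)
Definition subnet (f : {ffun V -> bool} -> {ffun V -> bool}) (I : {set V})
  (w : {ffun V -> bool}) : {ffun subT I -> bool} -> {ffun subT I -> bool} :=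
  fun y => [ffun u : subT I => f (glue y w) (val u)].
End Subnetworks.
Arguments glue {V} I y w.
Arguments subnet {V} f I w _.

From mathcomp Require Import all_boot zify.
Set Implicit Arguments. Unset Strict Implicit. Unset Printing Implicit Defensive.

(* The subnetwork of f induced on S by w is f acting on the subcube of points
   that agree with w off S, and its conjugate sends such a point y to the set of
   coordinates of S that are unstable at y.  By induction on |S| this conjugate
   is a bijection onto the subsets of S.  Splitting the subcube along a
   coordinate j of T and using the induction hypothesis on S \ j gives
   |F(T)| + |F(T \ j)| = 2 for the fibers F, so all fibers over sets of the same
   parity have the same size, a or 2 - a with a = |F(set0)|.  If a <> 1, the
   conjugate is onto the even or the odd subsets of S with fibers of size two,
   and the two points of a fiber differ on all of S (otherwise they would
   collide in a smaller subcube): the subnetwork is then even- or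
   odd-self-dual.  For S = V the fiber over set0 is the set of fixed points;
   and a point y <> x has an unstable coordinate where it differs from the
   fixed point x, since otherwise x and y would be two fixed points of the
   subnetwork induced on {v | x v <> y v}. *)

Lemma conjnE (W : finType) (g : {ffun W -> bool} -> {ffun W -> bool}) x i :
  conjn g x i = g x i (+) x i.
Proof. by rewrite /conjn /xorp ffunE. Qed.

Lemma self_dual_conjn (W : finType) (g : {ffun W -> bool} -> {ffun W -> bool}) :
  (forall x, conjn g (xorp x (ones W)) = conjn g x) -> self_dual g.
Proof.
move=> h x; apply/ffunP => i; move/ffunP/(_ i): (h x).
rewrite !conjnE; set y := xorp x _; rewrite /xorp /ones !ffunE addbT.
by case: (g y i); case: (g x i); case: (x i).
Qed.

Lemma hdist_xx (W : finType) (x : {ffun W -> bool}) : hdist x x = 0.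
Proof.
rewrite /hdist /weight (_ : [set _ | _] = set0) ?cards0 //.
by apply/setP => i; rewrite !inE ffunE addbb.
Qed.

Lemma hdist_flip (W : finType) (x y : {ffun W -> bool}) i :
  x i != y i -> hdist x y = (hdist x (xorp y (unit_pt i))).+1.
Proof.
move=> xyi; rewrite /hdist /weight (cardsD1 i) inE ffunE.
rewrite (_ : x i (+) y i) ?add1n; last by case: (x i) (y i) xyi => [] [].
congr _.+1; apply: eq_card => j; rewrite !inE !ffunE.
by case: eqVneq => [->|_] /=; [case: (x i) (y i) xyi => [] [] | rewrite addbF].
Qed.

Section Network.
Variable V : finType.
Variable f : {ffun V -> bool} -> {ffun V -> bool}.
Notation point := {ffun V -> bool}.
Implicit Types (S T : {set V}) (w y z : point).

(* [fiber S w T] is the preimage of T under the conjugate of [subnet f S w],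
   transported to the subcube through [glue]. *)
Definition subcube (S : {set V}) (w : point) : {set point} :=
  [set y : point | [forall v in ~: S, y v == w v]].
Definition unstable (S : {set V}) (y : point) : {set V} :=
  [set v in S | conjn f y v].
Definition fiber (S : {set V}) (w : point) (T : {set V}) : {set point} :=
  subcube S w :&: [set y | unstable S y == T].
Definition conj_bij (S : {set V}) : Prop :=
  forall w (T : {set V}), T \subset S -> #|fiber S w T| = 1.

Lemma subcubeP S w y : reflect (forall v, v \notin S -> y v = w v) (y \in subcube S w).
Proof.
rewrite inE; apply: (iffP forall_inP) => h v.
  by rewrite -in_setC => /h/eqP.
by rewrite in_setC => /h->.
Qed.

Lemma fiberP S w T y : y \in fiber S w T = (y \in subcube S w) && (unstable S y == T).
Proof. by rewrite in_setI inE. Qed.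

Lemma subcubeD1 S w j : j \in S ->
  subcube (S :\ j) w = subcube S w :&: [set y : point | y j == w j].
Proof.
move=> jS; apply/setP => y; apply/subcubeP/setIP => [h|[/subcubeP h]].
  split; last by rewrite inE h // !inE eqxx.
  by apply/subcubeP => v vS; apply: h; rewrite !inE negb_and vS orbT.
by rewrite inE => /eqP hj v; rewrite !inE negb_and negbK => /orP [/eqP->|/h].
Qed.

Lemma subcubeD1_xor S w j : j \in S ->
  subcube (S :\ j) (xorp w (unit_pt j)) = subcube S w :\: [set y : point | y j == w j].
Proof.
move=> jS; have offj v : v \notin S -> v != j by apply: contraNneq => ->.
apply/setP => y; apply/subcubeP/setDP => [h|[/subcubeP h]].
  split; last by rewrite in_set h ?ffunE ?eqxx ?addbT; [case: (w j) | rewrite !inE eqxx].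
  apply/subcubeP => v vS; rewrite h ?ffunE ?(negbTE (offj v vS)) ?addbF //.
  by rewrite !inE negb_and vS orbT.
rewrite inE => hj v; rewrite !inE negb_and negbK !ffunE => /orP [/eqP->|vS].
  by rewrite eqxx addbT; case: (y j) hj; case: (w j).
by rewrite h // (negbTE (offj v vS)) addbF.
Qed.

Lemma unstableD1 S T y j : j \in S ->
  (unstable S y == T) = (unstable (S :\ j) y == T :\ j) && (conjn f y j == (j \in T)).
Proof.
move=> jS; apply/eqP/andP => [<-|[/eqP e /eqP ej]].
  by split; apply/eqP; [apply/setP => v|]; rewrite !inE ?jS //; case: eqVneq.
apply/setP => v; move/setP/(_ v): e; rewrite !inE.
by case: eqVneq => [->|] //=; rewrite jS ej.
Qed.

(* Both sides count the points of the subcube whose unstable set in S :\ j is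
   T :\ j, split by the stability of j on the left and by the value at j on
   the right. *)
Lemma fiber_split S w T j : j \in S -> j \in T ->
  #|fiber S w T| + #|fiber S w (T :\ j)| =
  #|fiber (S :\ j) w (T :\ j)| + #|fiber (S :\ j) (xorp w (unit_pt j)) (T :\ j)|.
Proof.
move=> jS jT; set C := subcube S w :&: [set y | unstable (S :\ j) y == T :\ j].
set A := [set y | conjn f y j]; set B := [set y : point | y j == w j].
have TDD : T :\ j :\ j = T :\ j by rewrite setDDl setUid.
have -> : fiber S w T = C :&: A.
  by apply/setP => y; rewrite fiberP (unstableD1 _ _ jS) !inE jT eqb_id andbA.
have -> : fiber S w (T :\ j) = C :\: A.
  apply/setP => y; rewrite fiberP (unstableD1 _ _ jS) TDD !inE eqxx eqbF_neg.
  by case: (conjn f y j); rewrite ?andbT ?andbF.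
have -> : fiber (S :\ j) w (T :\ j) = C :&: B.
  by rewrite /fiber subcubeD1 // setIAC.
have -> : fiber (S :\ j) (xorp w (unit_pt j)) (T :\ j) = C :\: B.
  by rewrite /fiber subcubeD1_xor // setIDAC.
by rewrite !cardsID.
Qed.

Lemma unstable_sub S y : unstable S y \subset S.
Proof. by apply/subsetP => v; rewrite inE => /andP []. Qed.

Lemma fiber_unstable S w y : y \in subcube S w -> y \in fiber S w (unstable S y).
Proof. by move=> yC; rewrite fiberP yC eqxx. Qed.

Lemma fiber_eq1 S w T y z :
  #|fiber S w T| = 1 -> y \in fiber S w T -> z \in fiber S w T -> y = z.
Proof. by move=> /eqP/cards1P [x ->]; rewrite !inE => /eqP-> /eqP->. Qed.

Lemma conj_bij0 : conj_bij set0.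
Proof.
move=> w T; rewrite subset0 => /eqP ->.
rewrite (_ : fiber set0 w set0 = [set w]) ?cards1 //.
apply/setP => y; rewrite fiberP in_set1.
rewrite (_ : unstable set0 y = set0) ?eqxx ?andbT; last by apply/setP => v; rewrite !inE.
by apply/subcubeP/eqP => [h|-> //]; apply/ffunP => v; apply: h; rewrite inE.
Qed.

Definition flip S y : point := [ffun v => y v (+) (v \in S)].

Section InductionStep.
Variable S : {set V}.
Hypothesis bij_below : forall S', #|S'| < #|S| -> conj_bij S'.

Lemma fiber_parity w T : T \subset S ->
  if odd #|T| then #|fiber S w T| + #|fiber S w set0| = 2
  else #|fiber S w T| = #|fiber S w set0|.
Proof.
have [n] := ubnP #|T|; elim: n T => // n IH T ltTn TS.
have [->|[j jT]] := set_0Vmem T; first by rewrite cards0.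
have jS := subsetP TS j jT.
have ltSj : #|S :\ j| < #|S| by rewrite (cardsD1 j S) jS.
have cardT : #|T| = #|T :\ j|.+1 by rewrite (cardsD1 j T) jT.
have := fiber_split w jS jT; rewrite !(bij_below ltSj) ?setSD //.
have := IH (T :\ j) ltac:(lia) (subset_trans (subD1set _ _) TS).
by rewrite cardT /=; case: (odd _) => /= h1 h2; lia.
Qed.

Lemma conj_bij_fiber0 : (forall w, #|fiber S w set0| = 1) -> conj_bij S.
Proof.
move=> a1 w T TS; have := fiber_parity w TS; rewrite a1.
by case: (odd _) => h; lia.
Qed.

Lemma fiber_degenerate w : S != set0 -> #|fiber S w set0| != 1 ->
  exists b, forall T, T \subset S -> #|fiber S w T| = if odd #|T| == b then 2 else 0.
Proof.
move=> /set0Pn [j jS] /eqP a1.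
have := fiber_parity w (_ : [set j] \subset S); rewrite sub1set cards1 /= => /(_ jS) a2.
exists (#|fiber S w set0| == 0) => T TS; have := fiber_parity w TS.
set a := #|fiber S w set0| in a1 a2 *.
by have [a0|/eqP a0] := eqVneq a 0; case: (odd _) => /= h; lia.
Qed.

Lemma fiber_flip w T y z :
  y \in fiber S w T -> z \in fiber S w T -> y != z -> z = flip S y.
Proof.
rewrite !fiberP => /andP [/subcubeP yC /eqP yT] /andP [/subcubeP zC /eqP zT] yz.
set D := [set v | y v != z v].
have DS : D \subset S.
  by apply/subsetP => v; rewrite inE; apply: contraR => vS; rewrite yC ?zC.
have [eqDS|neqDS] := eqVneq D S.
  by apply/ffunP => v; rewrite ffunE -eqDS inE; case: (y v); case: (z v).
have ltDS : #|D| < #|S| by apply: proper_card; rewrite properEneq neqDS DS.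
have conj_yz v : v \in S -> conjn f y v = conjn f z v.
  by move=> vS; move/setP/(_ v): yT; rewrite -zT !inE vS.
suff : y = z by move/eqP; rewrite (negbTE yz).
apply: (fiber_eq1 (bij_below ltDS y (unstable_sub D y))).
  by apply: fiber_unstable; apply/subcubeP.
rewrite fiberP; apply/andP; split; first by apply/subcubeP => v; rewrite inE negbK => /eqP.
apply/eqP/setP => v; rewrite !inE; have [vD|//] := boolP (y v != z v).
by rewrite conj_yz // (subsetP DS) ?inE.
Qed.

Lemma unstable_flip w y : S != set0 -> #|fiber S w set0| != 1 ->
  y \in subcube S w -> unstable S (flip S y) = unstable S y.
Proof.
move=> Sn0 a1 yC; have [b Hb] := fiber_degenerate Sn0 a1.
have yF := fiber_unstable yC.
have F2 : #|fiber S w (unstable S y)| = 2.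
  have := Hb _ (unstable_sub S y); have : 0 < #|fiber S w (unstable S y)|.
    by rewrite card_gt0; apply/set0Pn; exists y.
  by case: (_ == b) => h e; rewrite e in h *.
have [z zF zy] : exists2 z, z \in fiber S w (unstable S y) & y != z.
  have : 0 < #|fiber S w (unstable S y) :\ y|.
    by move: F2; rewrite (cardsD1 y) yF add1n => -[->].
  by rewrite card_gt0 => /set0Pn [z]; rewrite in_setD1 eq_sym => /andP [yz zF]; exists z.
rewrite -(fiber_flip yF zF zy).
by move: zF; rewrite fiberP => /andP [_ /eqP].
Qed.

End InductionStep.

Lemma glue_val S (x : {ffun subT S -> bool}) w (u : subT S) : glue S x w (val u) = x u.
Proof. by rewrite ffunE valK. Qed.

Lemma glue_subcube S (x : {ffun subT S -> bool}) w : glue S x w \in subcube S w.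
Proof. by apply/subcubeP => v vS; rewrite ffunE insubF //; apply/negbTE. Qed.

Lemma glue_restr S w y : y \in subcube S w -> glue S [ffun u => y (val u)] w = y.
Proof.
move/subcubeP => yC; apply/ffunP => v; rewrite /glue ffunE.
by case: insubP => [u _ <-|vS]; [rewrite ffunE | rewrite yC].
Qed.

Lemma glue_flip S (x : {ffun subT S -> bool}) w :
  glue S (xorp x (ones _)) w = flip S (glue S x w).
Proof.
apply/ffunP => v; rewrite /flip /glue !ffunE.
by case: insubP => [u -> _|/negbTE ->]; rewrite ?ffunE ?addbT ?addbF.
Qed.

Lemma conjn_subnet S w x (u : subT S) :
  conjn (subnet f S w) x u = (val u \in unstable S (glue S x w)).
Proof. by rewrite inE (valP u) !conjnE ffunE glue_val. Qed.

Definition lift_set S (e : {ffun subT S -> bool}) : {set V} := val @: [set u | e u].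

Lemma mem_lift_set S (e : {ffun subT S -> bool}) u : (val u \in lift_set e) = e u.
Proof. by rewrite mem_imset ?inE //; exact: val_inj. Qed.

Lemma lift_set_sub S (e : {ffun subT S -> bool}) : lift_set e \subset S.
Proof. by apply/subsetP => _ /imsetP [u _ ->]; exact: valP. Qed.

Lemma card_lift_set S (e : {ffun subT S -> bool}) : #|lift_set e| = weight e.
Proof. by rewrite card_imset //; exact: val_inj. Qed.

Lemma unstable_glue S w x :
  unstable S (glue S x w) = lift_set (conjn (subnet f S w) x).
Proof.
apply/setP => v; have [vS|vS] := boolP (v \in S).
  by rewrite -[v]/(val (Sub v vS : subT S)) mem_lift_set conjn_subnet.
by rewrite inE (negbTE vS); apply/esym/negbTE; apply: contra vS; apply/subsetP/lift_set_sub.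
Qed.

Lemma conjn_subnet_image S w e :
  (exists x, conjn (subnet f S w) x = e) <-> 0 < #|fiber S w (lift_set e)|.
Proof.
rewrite card_gt0; split => [[x <-]|/set0Pn [y]].
  by apply/set0Pn; exists (glue S x w); rewrite fiberP glue_subcube unstable_glue eqxx.
rewrite fiberP => /andP [yC /eqP yF]; exists [ffun u => y (val u)].
by apply/ffunP => u; rewrite conjn_subnet glue_restr // yF mem_lift_set.
Qed.

Lemma degenerate_subnet S w : (forall S', #|S'| < #|S| -> conj_bij S') ->
  S != set0 -> #|fiber S w set0| != 1 ->
  even_self_dual (subnet f S w) \/ odd_self_dual (subnet f S w).
Proof.
move=> bij_below Sn0 a1.
have sd : self_dual (subnet f S w).
  apply: self_dual_conjn => x; apply/ffunP => u.
  by rewrite !conjn_subnet glue_flip (unstable_flip bij_below Sn0 a1 (glue_subcube x w)).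
have [b Hb] := fiber_degenerate bij_below Sn0 a1.
have image e : (exists x, conjn (subnet f S w) x = e) <-> odd (weight e) == b.
  apply: iff_trans (conjn_subnet_image w e) _.
  by rewrite Hb ?lift_set_sub // card_lift_set; case: (_ == b).
case: b {Hb} image => image; [right | left]; split => // e; apply: iff_trans (image e) _.
  by rewrite /odd_pt eqb_id.
by rewrite /even_pt eqbF_neg.
Qed.

Lemma conj_bij_all :
  (forall I w, I != set0 ->
     ~ even_self_dual (subnet f I w) /\ ~ odd_self_dual (subnet f I w)) ->
  forall S, conj_bij S.
Proof.
move=> no_sd S; have [n] := ubnP #|S|; elim: n S => // n IH S ltSn.
have [->|Sn0] := eqVneq S set0; first exact: conj_bij0.
have bij_below S' : #|S'| < #|S| -> conj_bij S' by move=> ltS'; apply: IH; lia.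
apply: conj_bij_fiber0 => // w; apply/eqP; apply: contraT => a1.
have [nesd nosd] := no_sd S w Sn0.
by case: (degenerate_subnet bij_below Sn0 a1).
Qed.

Lemma unstable_eq0P S y :
  reflect (forall v, v \in S -> f y v = y v) (unstable S y == set0).
Proof.
apply: (iffP eqP) => [/setP e v vS | e]; last first.
  by apply/setP => v; rewrite !inE conjnE; case: (boolP (v \in S)) => // /e ->; rewrite addbb.
by move: (e v); rewrite !inE vS conjnE /=; case: (f y v); case: (y v).
Qed.

Lemma fiberT0 w y : (y \in fiber setT w set0) = (f y == y).
Proof.
rewrite fiberP (_ : y \in subcube setT w); last by apply/subcubeP => v; rewrite inE.
by apply/unstable_eq0P/eqP => [e|-> //]; apply/ffunP => v; apply: e.
Qed.

Lemma unstable_toward_fixed x y : (forall S, conj_bij S) -> f x = x -> y != x ->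
  [exists i, (f y i != y i) && (x i != y i)].
Proof.
move=> bij fx; apply: contraNT => /existsPn stable.
set D := [set v | x v != y v].
apply/eqP/(fiber_eq1 (bij D x set0 (sub0set D))); rewrite fiberP.
  apply/andP; split; first by apply/subcubeP => v; rewrite inE negbK => /eqP.
  apply/unstable_eq0P => v; rewrite inE => xyv.
  by move: (stable v); rewrite xyv andbT negbK => /eqP.
apply/andP; split; first by apply/subcubeP.
by apply/unstable_eq0P => v _; rewrite fx.
Qed.

Lemma async_path_to x :
  (forall y, y != x -> [exists i, (f y i != y i) && (x i != y i)]) ->
  forall y, exists p, [/\ size p = hdist x y, path (async_arc f) y p & last y p = x].
Proof.
move=> step y; have [n] := ubnP (hdist x y); elim: n y => // n IH y lt_n.
have [->|yx] := eqVneq y x; first by exists [::]; rewrite hdist_xx.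
have /existsP [i /andP [fyi xyi]] := step y yx.
rewrite (hdist_flip xyi) in lt_n *.
have [p [sp pp lp]] := IH _ lt_n.
exists (xorp y (unit_pt i) :: p); split => //=; first by rewrite sp.
by rewrite pp andbT; apply/existsP; exists i; rewrite fyi eqxx.
Qed.

End Network.

Theorem corollary4 (V : finType) (f : {ffun V -> bool} -> {ffun V -> bool}) :
  0 < #|V| ->
  (forall (I : {set V}) (w : {ffun V -> bool}), I != set0 ->
      ~ even_self_dual (subnet f I w) /\ ~ odd_self_dual (subnet f I w)) ->
  exists x : {ffun V -> bool},
    [/\ f x = x,
        (forall x' : {ffun V -> bool}, f x' = x' -> x' = x) &
        (forall y : {ffun V -> bool}, exists p : seq {ffun V -> bool},
           [/\ size p = hdist x y, path (async_arc f) y p & last y p = x])].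
Proof.
move=> _ no_sd; have bij := conj_bij_all no_sd.
set w0 : {ffun V -> bool} := [ffun=> false].
have /eqP/cards1P [x Fx] := bij setT w0 set0 (sub0set _).
have fixedE y : (f y == y) = (y == x) by rewrite -(fiberT0 f w0) Fx inE.
have fx : f x = x by apply/eqP; rewrite fixedE.
exists x; split => // [x' /eqP|]; first by rewrite fixedE => /eqP.
by apply: async_path_to => y; apply: unstable_toward_fixed.
Qed.
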